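(* Let $M$ be a dihedral axial decomposition algebra of Majorana type $(\eta,\eta)$ over a field $\mathbb{F}$ with $\operatorname{char}\mathbb{F}\neq2$, where $\eta\in\mathbb{F}\setminus\{0,1,\tfrac12\}$, with generating axes $(a_i)_{i\in\mathbb{Z}}$. Let $\mu\in\mathbb{F}$ be such that $a_0p_{2,1}=\frac{(2\eta-1)(4\lambda_1-3\eta)}{2\eta}(2p_{1,0}+\eta(a_1+a_{-1}))+\mu a_0$. If $\lambda_1=\frac{3\eta}{4}$, then $p_{2,1}=p_{2,0}$ or $\mu=0$.
   Context: $M$ is a commutative nonassociative $\mathbb{F}$-algebra. With $\Phi(0)=0,\Phi(1)=1,\Phi(2)=\Phi(3)=\eta$, an axis $a\in M$ is an element together with a decomposition $M=\bigoplus_{i=0}^3M^i(a)$ such that $xa=\Phi(i)x$ for $x\in M^i(a)$, $M^1(a)=\mathbb{F}a$, and $M^0(a)M^i(a)\subset M^i(a)$ for all $i$, $M^2(a)M^2(a)\subset M^0(a)\oplus M^1(a)$, $M^2(a)M^3(a)\subset M^3(a)$, $M^3(a)M^3(a)\subset M^0(a)\oplus M^1(a)\oplus M^2(a)$. The Miyamoto involution $\tau(a)$ is the automorphism acting as $1$ on $M^0(a)\oplus M^1(a)\oplus M^2(a)$ and $-1$ on $M^3(a)$. $M$ is dihedral with axes $(a_i)_{i\in\mathbb{Z}}$ if: $M$ is generated by the $a_i$; $a_i\mapsto a_{i+1}$ extends to an automorphism of $M$; and $\tau(a_j)(a_i)=a_{2j-i}$ for all $i,j$. For $i,j\in\mathbb{Z}$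 put $p_{i,j}=a_ja_{i+j}-\eta(a_j+a_{i+j})$. It is known that $a_0p_{i,0}\in\mathbb{F}a_0$; the scalar $\lambda_i\in\mathbb{F}$ is defined by $a_0p_{i,0}=((1-\eta)\lambda_i-\eta)a_0$. (Such a $\mu$ exists by a proposition of the paper.) *)

From HB Require Import structures.
From mathcomp Require Import all_boot all_order all_algebra.
Set Implicit Arguments. Unset Strict Implicit. Unset Printing Implicit Defensive.
Import Order.TTheory GRing.Theory Num.Theory.
Local Open Scope ring_scope.

Section AxialDefs.
Variables (F : fieldType) (M : lmodType F).

Definition comm_algebra_product (mul : M -> M -> M) : Prop :=
  (forall x y, mul x y = mul y x) /\
  (forall (c : F) x y z, mul (c *: x + y) z = c *: mul x z + mul y z).

Definition subspace (S : M -> Prop) : Prop :=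
  S 0 /\ forall (c : F) x y, S x -> S y -> S (c *: x + y).

Definition Phi (eta : F) (i : nat) : F :=
  match i with 0%N => 0 | 1%N => 1 | _ => eta end.

(* a is an axis with decomposition M = E 0 + E 1 + E 2 + E 3 (direct),
   of Majorana type (eta, eta) as in the context. Only E 0..E 3 matter. *)
Record axis (mul : M -> M -> M) (eta : F) (a : M) (E : nat -> M -> Prop)
  : Prop := {
  axis_sub : forall i, (i < 4)%N -> subspace (E i);
  axis_span : forall x, exists x0 x1 x2 x3,
      [/\ E 0%N x0, E 1%N x1, E 2%N x2, E 3%N x3 & x = x0 + x1 + x2 + x3];
  axis_indep : forall x0 x1 x2 x3,
      E 0%N x0 -> E 1%N x1 -> E 2%N x2 -> E 3%N x3 ->
      x0 + x1 + x2 + x3 = 0 -> [/\ x0 = 0, x1 = 0, x2 = 0 & x3 = 0];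
  axis_eig : forall i x, (i < 4)%N -> E i x -> mul x a = Phi eta i *: x;
  axis_M1 : forall x, E 1%N x <-> exists c : F, x = c *: a;
  axis_fus0 : forall i x y, (i < 4)%N -> E 0%N x -> E i y -> E i (mul x y);
  axis_fus22 : forall x y, E 2%N x -> E 2%N y ->
      exists y0 y1, [/\ E 0%N y0, E 1%N y1 & mul x y = y0 + y1];
  axis_fus23 : forall x y, E 2%N x -> E 3%N y -> E 3%N (mul x y);
  axis_fus33 : forall x y, E 3%N x -> E 3%N y ->
      exists y0 y1 y2, [/\ E 0%N y0, E 1%N y1, E 2%N y2 & mul x y = y0 + y1 + y2]
}.

Definition miyamoto_image (E : nat -> M -> Prop) (x y : M) : Prop :=
  forall x0 x1 x2 x3, E 0%N x0 -> E 1%N x1 -> E 2%N x2 -> E 3%N x3 ->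
    x = x0 + x1 + x2 + x3 -> y = x0 + x1 + x2 - x3.

Definition generates (mul : M -> M -> M) (a : int -> M) : Prop :=
  forall S : M -> Prop, subspace S ->
    (forall x y, S x -> S y -> S (mul x y)) ->
    (forall i, S (a i)) -> forall x, S x.

Definition algebra_automorphism (mul : M -> M -> M) (f : M -> M) : Prop :=
  [/\ bijective f,
      forall (c : F) x y, f (c *: x + y) = c *: f x + f y
    & forall x y, f (mul x y) = mul (f x) (f y)].

Record dihedral (mul : M -> M -> M) (eta : F) (a : int -> M)
  (E : int -> nat -> M -> Prop) : Prop := {
  dih_axes : forall i, axis mul eta (a i) (E i);
  dih_gen : generates mul a;
  dih_shift : exists f, algebra_automorphism mul f /\ forall i, f (a i) = a (i + 1);
  dih_tau : forall i j, miyamoto_image (E j) (a i) (a (2 * j - i))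
}.

Definition pp (mul : M -> M -> M) (eta : F) (a : int -> M) (i j : int) : M :=
  mul (a j) (a (i + j)) - eta *: (a j + a (i + j)).

End AxialDefs.

(* With lambda1 = 3 eta / 4 the hypothesis reads a_0 p_{2,1} = mu a_0, so
   p_{2,1} = mu a_0 + y with y in M^0(a_0).  Relative to a_0, the element
   p_{2,0} = a_0 a_2 - eta (a_0 + a_2) only sees the M^0 and M^1 components
   of a_2, which tau(a_0) fixes; as tau(a_0) maps a_2 to a_{-2}, we get
   p_{2,-2} = p_{2,0}, and the shift automorphism makes j |-> p_{2,j}
   2-periodic.  Shifting a_0 p_{2,1} = mu a_0 by 2 gives a_2 p_{2,1} = mu a_2,
   and the fusion law for M^0(a_0) turns this into p_{2,0} p_{2,1} = mu p_{2,0}.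
   Shifting by 1 gives p_{2,1} p_{2,0} = mu p_{2,1}, so commutativity yields
   mu p_{2,0} = mu p_{2,1}. *)

From HB Require Import structures.
From mathcomp Require Import all_boot all_order all_algebra.
Import Order.TTheory GRing.Theory Num.Theory.
Set Implicit Arguments. Unset Strict Implicit. Unset Printing Implicit Defensive.
Local Open Scope ring_scope.

Section CommutativeProduct.
Variables (F : fieldType) (M : lmodType F) (mul : M -> M -> M).
Hypothesis mulP : comm_algebra_product mul.

Lemma prodC x y : mul x y = mul y x.
Proof. by case: mulP. Qed.

Lemma prodDZl c x y z : mul (c *: x + y) z = c *: mul x z + mul y z.
Proof. by case: mulP. Qed.

Lemma prodDl x y z : mul (x + y) z = mul x z + mul y z.
Proof. by rewrite -[x]scale1r prodDZl !scale1r. Qed.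

Lemma prod0l z : mul 0 z = 0.
Proof. by apply: (addrI (mul 0 z)); rewrite -prodDl !addr0. Qed.

Lemma prodZl c x z : mul (c *: x) z = c *: mul x z.
Proof. by rewrite -[c *: x]addr0 prodDZl prod0l addr0. Qed.

Lemma prodBl x y z : mul (x - y) z = mul x z - mul y z.
Proof. by rewrite prodDl -scaleN1r prodZl scaleN1r. Qed.

Lemma prodDr x y z : mul z (x + y) = mul z x + mul z y.
Proof. by rewrite prodC prodDl !(prodC _ z). Qed.

Lemma prodZr c x z : mul z (c *: x) = c *: mul z x.
Proof. by rewrite prodC prodZl prodC. Qed.

End CommutativeProduct.

Section Subspace.
Variables (F : fieldType) (M : lmodType F) (S : M -> Prop).
Hypothesis subS : subspace S.

Lemma subspace0 : S 0.
Proof. by case: subS. Qed.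

Lemma subspaceD x y : S x -> S y -> S (x + y).
Proof. by case: subS => _ closedS Sx Sy; rewrite -[x]scale1r; apply: closedS. Qed.

Lemma subspaceZ c x : S x -> S (c *: x).
Proof. by case: subS => S0 closedS Sx; rewrite -[_ *: _]addr0; apply: closedS. Qed.

Lemma subspaceB x y : S x -> S y -> S (x - y).
Proof. by move=> Sx Sy; rewrite -scaleN1r; apply/subspaceD/subspaceZ. Qed.

End Subspace.

Section Automorphism.
Variables (F : fieldType) (M : lmodType F) (mul : M -> M -> M) (g : M -> M).
Hypothesis autg : algebra_automorphism mul g.

Lemma autD x y : g (x + y) = g x + g y.
Proof. by case: autg => _ lin _; rewrite -[x]scale1r lin !scale1r. Qed.

Lemma aut0 : g 0 = 0.
Proof. by apply: (addrI (g 0)); rewrite -autD !addr0. Qed.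

Lemma autZ c x : g (c *: x) = c *: g x.
Proof. by case: autg => _ lin _; rewrite -[_ *: x]addr0 lin aut0 addr0. Qed.

Lemma autB x y : g (x - y) = g x - g y.
Proof. by rewrite autD -scaleN1r autZ scaleN1r. Qed.

Lemma autM x y : g (mul x y) = mul (g x) (g y).
Proof. by case: autg. Qed.

End Automorphism.

Lemma algebra_automorphism_id (F : fieldType) (M : lmodType F) (mul : M -> M -> M) :
  algebra_automorphism mul id.
Proof. by split=> //; exists id. Qed.

Lemma algebra_automorphism_comp (F : fieldType) (M : lmodType F)
    (mul : M -> M -> M) (f g : M -> M) :
  algebra_automorphism mul f -> algebra_automorphism mul g ->
  algebra_automorphism mul (f \o g).
Proof.
move=> autf autg; split=> [|c x y|x y] /=; last by rewrite (autM autg) (autM autf).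
- by case: autf => bijf _ _; case: autg => bijg _ _; apply: bij_comp.
- by rewrite (autD autg) (autZ autg) (autD autf) (autZ autf).
Qed.

Lemma algebra_automorphism_inv (F : fieldType) (M : lmodType F)
    (mul : M -> M -> M) (f g : M -> M) :
  algebra_automorphism mul f -> cancel f g -> cancel g f ->
  algebra_automorphism mul g.
Proof.
move=> autf fK gK; split=> [|c x y|x y]; first by exists f.
- by apply: (can_inj fK); rewrite gK (autD autf) (autZ autf) !gK.
- by apply: (can_inj fK); rewrite gK (autM autf) !gK.
Qed.

Definition axis_pp (F : fieldType) (M : lmodType F) (mul : M -> M -> M)
  (eta : F) (b x : M) : M := mul b x - eta *: (b + x).

Section Axis.
Variables (F : fieldType) (M : lmodType F) (mul : M -> M -> M).
Hypothesis mulP : comm_algebra_product mul.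
Variables (eta : F) (a : M) (E : nat -> M -> Prop).
Hypothesis axisA : axis mul eta a E.

Let E0s := axis_sub axisA (i := 0%N) isT.
Let E1s := axis_sub axisA (i := 1%N) isT.
Let E2s := axis_sub axisA (i := 2%N) isT.
Let E3s := axis_sub axisA (i := 3%N) isT.

Lemma axis_E1 c : E 1%N (c *: a).
Proof. by apply/(axis_M1 axisA); exists c. Qed.

Lemma axis_mul_sum x0 x1 x2 x3 :
  E 0%N x0 -> E 1%N x1 -> E 2%N x2 -> E 3%N x3 ->
  mul a (x0 + x1 + x2 + x3) = x1 + eta *: x2 + eta *: x3.
Proof.
move=> X0 X1 X2 X3; rewrite !(prodDr mulP) !(prodC mulP a).
rewrite (axis_eig axisA _ X0) ?(axis_eig axisA _ X1) ?(axis_eig axisA _ X2) //.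
by rewrite (axis_eig axisA _ X3) // scale0r scale1r add0r.
Qed.

Lemma axis_decomp_inj x0 x1 x2 x3 y0 y1 y2 y3 :
  E 0%N x0 -> E 1%N x1 -> E 2%N x2 -> E 3%N x3 ->
  E 0%N y0 -> E 1%N y1 -> E 2%N y2 -> E 3%N y3 ->
  x0 + x1 + x2 + x3 = y0 + y1 + y2 + y3 ->
  [/\ x0 = y0, x1 = y1, x2 = y2 & x3 = y3].
Proof.
move=> X0 X1 X2 X3 Y0 Y1 Y2 Y3 exy.
have := axis_indep axisA (subspaceB E0s X0 Y0) (subspaceB E1s X1 Y1)
  (subspaceB E2s X2 Y2) (subspaceB E3s X3 Y3).
have -> : x0 - y0 + (x1 - y1) + (x2 - y2) + (x3 - y3) =
          (x0 + x1 + x2 + x3) - (y0 + y1 + y2 + y3).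
  by rewrite !opprD !addrA (ACl (1*3*5*7*2*4*6*8)).
by rewrite exy subrr => /(_ erefl) [] /subr0_eq-> /subr0_eq-> /subr0_eq-> /subr0_eq->.
Qed.

Lemma axis_ppE x0 x1 x2 x3 :
  E 0%N x0 -> E 1%N x1 -> E 2%N x2 -> E 3%N x3 ->
  axis_pp mul eta a (x0 + x1 + x2 + x3) = (1 - eta) *: x1 - eta *: a - eta *: x0.
Proof.
move=> X0 X1 X2 X3; rewrite /axis_pp axis_mul_sum //.
rewrite !scalerDr scalerBl scale1r !opprD !addrA.
by rewrite (ACl (((((1*6)*4)*5)*(2*7))*(3*8))) /= !subrr !addr0.
Qed.

(* Only the E0 and E1 components of x survive in [axis_pp x], and tau fixes them. *)
Lemma axis_pp_miyamoto x y :
  miyamoto_image E x y -> axis_pp mul eta a y = axis_pp mul eta a x.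
Proof.
have [x0 [x1 [x2 [x3 [X0 X1 X2 X3 ->]]]]] := axis_span axisA x.
move=> /(_ _ _ _ _ X0 X1 X2 X3 erefl) ->.
have X3N : E 3%N (- x3) by have := subspaceZ E3s (-1) X3; rewrite scaleN1r.
by rewrite (axis_ppE X0 X1 X2 X3N) (axis_ppE X0 X1 X2 X3).
Qed.

Lemma axis_mul_E0_eigen x0 x1 x2 x3 y0 r s :
  E 0%N x0 -> E 1%N x1 -> E 2%N x2 -> E 3%N x3 -> E 0%N y0 ->
  mul (x0 + x1 + x2 + x3) (r *: a + y0) = s *: (x0 + x1 + x2 + x3) ->
  mul x0 y0 = s *: x0.
Proof.
move=> X0 X1 X2 X3 Y0.
have [c ->] : exists c, x1 = c *: a by apply/(axis_M1 axisA).
rewrite (prodDr mulP) (prodZr mulP) (prodC mulP _ a) (axis_mul_sum X0 (axis_E1 c) X2 X3).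
rewrite !(prodDl mulP) (prodZl mulP) (prodC mulP a) (axis_eig axisA _ Y0) // scale0r.
rewrite scaler0 addr0 !scalerDr !addrA (ACl (((4*1)*(2*5))*(3*6))) /= => e.
(* Compare E0-components: y0 in E0 multiplies every eigenspace into itself. *)
have Ex0 : E 0%N (mul x0 y0) by rewrite (prodC mulP); apply: (axis_fus0 axisA).
have Ex2 : E 2%N (mul x2 y0) by rewrite (prodC mulP); apply: (axis_fus0 axisA).
have Ex3 : E 3%N (mul x3 y0) by rewrite (prodC mulP); apply: (axis_fus0 axisA).
by have [] := axis_decomp_inj Ex0 (subspaceZ E1s r (axis_E1 c))
  (subspaceD E2s (subspaceZ E2s _ (subspaceZ E2s _ X2)) Ex2)
  (subspaceD E3s (subspaceZ E3s _ (subspaceZ E3s _ X3)) Ex3)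
  (subspaceZ E0s s X0) (subspaceZ E1s s (axis_E1 c))
  (subspaceZ E2s s X2) (subspaceZ E3s s X3) e.
Qed.

Lemma axis_pp_eigen x r y0 :
  E 0%N y0 -> mul x (r *: a + y0) = r *: x ->
  mul (axis_pp mul eta a x) (r *: a + y0) = r *: axis_pp mul eta a x.
Proof.
have [x0 [x1 [x2 [x3 [X0 X1 X2 X3 ->]]]]] := axis_span axisA x.
move=> Y0 /(axis_mul_E0_eigen X0 X1 X2 X3 Y0) x0y0.
have [c ->] : exists c, x1 = c *: a by apply/(axis_M1 axisA).
rewrite (axis_ppE X0 (axis_E1 c) X2 X3) scalerA -[eta *: a]scale1r scalerA -scalerBl.
rewrite (prodBl mulP) !(prodZl mulP) !(prodDr mulP) !(prodZr mulP) x0y0.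
have Ea : E 1%N a by have := axis_E1 1; rewrite scale1r.
rewrite (prodC mulP a y0) (axis_eig axisA _ Ea) // (axis_eig axisA _ Y0) //.
rewrite (axis_eig axisA _ X0) //= !scale0r scaler0 scale1r !addr0 add0r scalerBr !scalerA.
by congr (_ *: _ - _ *: _); rewrite mulrC.
Qed.

Hypothesis eta_neq0 : eta != 0.

Lemma axis_mul_eq_scale x r :
  mul a x = r *: a -> exists2 x0, E 0%N x0 & x = r *: a + x0.
Proof.
have [x0 [x1 [x2 [x3 [X0 X1 X2 X3 ->]]]]] := axis_span axisA x.
rewrite axis_mul_sum // => e.
have [] := axis_decomp_inj (subspace0 E0s) X1 (subspaceZ E2s eta X2)
  (subspaceZ E3s eta X3) (subspace0 E0s) (axis_E1 r) (subspace0 E2s) (subspace0 E3s).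
  by rewrite !add0r !addr0 e.
move=> _ -> /eqP; rewrite scaler_eq0 (negbTE eta_neq0) => /eqP->.
move=> /eqP; rewrite scaler_eq0 (negbTE eta_neq0) => /eqP->.
by exists x0; rewrite // !addr0 addrC.
Qed.

End Axis.

Section Dihedral.
Variables (F : fieldType) (M : lmodType F) (mul : M -> M -> M).
Hypothesis mulP : comm_algebra_product mul.
Variables (eta : F) (a : int -> M) (E : int -> nat -> M -> Prop).
Hypothesis dihM : dihedral mul eta a E.

Lemma dihedral_shift (n : int) :
  exists2 g, algebra_automorphism mul g & forall i, g (a i) = a (i + n).
Proof.
have shift_nat (k : nat) :
    exists2 g, algebra_automorphism mul g & forall i, g (a i) = a (i + k%:Z).
  elim: k => [|k [g autg ga]].
    by exists id => [|i]; rewrite ?addr0 //; apply: algebra_automorphism_id.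
  have [f [autf fa]] := dih_shift dihM.
  exists (f \o g) => [|i]; first exact: algebra_automorphism_comp.
  by rewrite /= ga fa -addrA -[k.+1]addn1 PoszD.
case: n => k; first exact: shift_nat.
have [g autg ga] := shift_nat k.+1.
have [h gK hK] : bijective g by case: autg.
exists h => [|i]; first exact: algebra_automorphism_inv autg gK hK.
have -> : a i = g (a (i + Negz k)) by rewrite ga NegzE addrNK.
by rewrite gK.
Qed.

Lemma aut_shift_pp g (n : int) i j :
  algebra_automorphism mul g -> (forall k, g (a k) = a (k + n)) ->
  g (pp mul eta a i j) = pp mul eta a i (j + n).
Proof.
by move=> autg ga; rewrite (autB autg) (autM autg) (autZ autg) (autD autg) !ga /pp addrA.
Qed.

Lemma pp_opp i : pp mul eta a i (- i) = pp mul eta a i 0.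
Proof.
have := axis_pp_miyamoto mulP (dih_axes dihM 0) (dih_tau dihM (i := i) (j := 0)).
rewrite mulr0 sub0r /pp /axis_pp subrr addr0 (prodC mulP (a (- i))).
by rewrite [a (- i) + _]addrC => ->.
Qed.

Lemma pp_periodic i j : pp mul eta a i (j + i) = pp mul eta a i j.
Proof.
have [g autg ga] := dihedral_shift (j + i).
have := congr1 g (pp_opp i); rewrite !(aut_shift_pp _ _ autg ga) add0r.
by rewrite [- _ + _]addrC addrK => ->.
Qed.

End Dihedral.

Theorem corollary1 (F : fieldType) (M : lmodType F) (mul : M -> M -> M)
  (eta : F) (a : int -> M) (E : int -> nat -> M -> Prop) (lambda1 mu : F) :
  comm_algebra_product mul ->
  (2%:R : F) != 0 ->
  eta != 0 -> eta != 1 -> eta != 2^-1 ->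
  dihedral mul eta a E ->
  mul (a 0) (pp mul eta a 1 0) = ((1 - eta) * lambda1 - eta) *: a 0 ->
  mul (a 0) (pp mul eta a 2 1) =
    ((2 * eta - 1) * (4 * lambda1 - 3 * eta) / (2 * eta)) *:
      (2%:R *: pp mul eta a 1 0 + eta *: (a 1 + a (-1))) + mu *: a 0 ->
  lambda1 = 3 * eta / 4 ->
  pp mul eta a 2 1 = pp mul eta a 2 0 \/ mu = 0.
Proof.
move=> mulP two_neq0 eta_neq0 _ _ dihM _ a0P21 lambda1E.
set P := pp mul eta a 2.
have four_neq0 : (4 : F) != 0 by rewrite (_ : 4 = 2%:R * 2%:R) ?mulf_neq0 -?natrM.
have a0P1 : mul (a 0) (P 1) = mu *: a 0.
  by rewrite a0P21 lambda1E [4 * _]mulrC divfK // subrr mulr0 mul0r scale0r add0r.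
have [y0 Ey0 P1E] := axis_mul_eq_scale mulP (dih_axes dihM 0) eta_neq0 a0P1.
have [g2 aut2 g2a] := dihedral_shift dihM 2.
have a2P1 : mul (a 2) (P 1) = mu *: a 2.
  have := congr1 g2 a0P1; rewrite (autM aut2) (autZ aut2) g2a add0r.
  by rewrite /P (aut_shift_pp _ _ _ aut2 g2a) (pp_periodic mulP dihM).
have P0P1 : mul (P 0) (P 1) = mu *: P 0.
  have -> : P 0 = axis_pp mul eta (a 0) (a 2) by rewrite /P /pp addr0.
  by rewrite P1E; apply: (axis_pp_eigen mulP (dih_axes dihM 0) Ey0); rewrite -P1E.
have [g1 aut1 g1a] := dihedral_shift dihM 1.
have P1P0 : mul (P 1) (P 0) = mu *: P 1.
  have := congr1 g1 P0P1; rewrite (autM aut1) (autZ aut1) /P.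
  rewrite !(aut_shift_pp _ _ _ aut1 g1a) (_ : 1 + 1 = 0 + 2) //.
  by rewrite (pp_periodic mulP dihM) add0r.
have : mu *: P 0 = mu *: P 1 by rewrite -P0P1 -P1P0 (prodC mulP).
by have [->|/scalerI Pinj /Pinj->] := eqVneq mu 0; [right | left].
Qed.
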